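(* Let $F$ be an edge-transitive graph, fix an edge $xy$ of $F$, let $F'=F\setminus xy$, and for an integer $t\ge2$ let $F'_t$ be the graph obtained from $F'[K_t]$ by adding one edge between a vertex of the copy of $K_t$ replacing $x$ and a vertex of the copy of $K_t$ replacing $y$. If $G$ is a regular $F$-saturated graph, then for every $t\ge2$ the graph $G[K_t]$ is regular and $F'_t$-oversaturated. Moreover, if $F=K_s$ for some $s\ge3$, then $G[K_t]$ is $F'_t$-saturated. In particular, for every $t\ge2$ and $F=K_s$ with $s\ge 3$, $\liminf_{n\to\infty}\frac{\mathrm{rsat}(n,F'_t)}{n^2}=0$.
   Context: All graphs are finite and simple. For graphs $G,H$, the blow-up $G[H]$ is obtained by replacing each vertex of $G$ by a copy of $H$ and, for every edge $uv$ of $G$, adding all edges between the copies corresponding to $u$ and $v$. $K_t$ is the complete graph on $t$ vertices. A graph $G$ is $F$-saturated if it contains no copy of $F$ but adding any non-edge creates a copy of $F$; $G$ is $F$-oversaturated if adding any non-edge $e$ creates a copy of $F$ containing $e$ ($G$ need not be $F$-free). $\mathrm{rsat}(n,F)$ is the smallest number of edges of a regular $n$-vertex $F$-saturated graph, the $\liminf$ being over $n$ for which it is defined. A graph is edge-transitive if its automorphism group acts transitively on its edges. *)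

From mathcomp Require Import all_boot all_order all_algebra all_fingroup.
Set Implicit Arguments. Unset Strict Implicit. Unset Printing Implicit Defensive.
Import Order.TTheory GRing.Theory Num.Theory.


Definition simple_graph (V : finType) (e : rel V) := symmetric e /\ irreflexive e.

Definition complete_rel (s : nat) : rel 'I_s := fun i j => i != j.
Arguments complete_rel s : clear implicits.

Definition add_edge (V : finType) (e : rel V) (u v : V) : rel V :=
  fun a b => e a b || ((a == u) && (b == v)) || ((a == v) && (b == u)).

Definition del_edge (V : finType) (e : rel V) (x y : V) : rel V :=
  fun a b => e a b && ~~ (((a == x) && (b == y)) || ((a == y) && (b == x))).

Definition blowup_clique (V : finType) (e : rel V) (t : nat) : rel (V * 'I_t) :=
  fun p q => ((p.1 == q.1) && (p.2 != q.2)) || e p.1 q.1.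
Arguments blowup_clique {V} e t.

Definition Fprime_t (V : finType) (eF : rel V) (x y : V) (t : nat) (a b : 'I_t)
  : rel (V * 'I_t) :=
  add_edge (blowup_clique (del_edge eF x y) t) (x, a) (y, b).

Definition contains (VF VG : finType) (eF : rel VF) (eG : rel VG) :=
  exists f : VF -> VG, injective f /\ forall u v, eF u v -> eG (f u) (f v).

Definition F_saturated (VF VG : finType) (eF : rel VF) (eG : rel VG) :=
  ~ contains eF eG /\
  forall u v : VG, u != v -> ~~ eG u v -> contains eF (add_edge eG u v).

Definition F_oversaturated (VF VG : finType) (eF : rel VF) (eG : rel VG) :=
  forall u v : VG, u != v -> ~~ eG u v ->
    exists f : VF -> VG, [/\ injective f,
      (forall a b, eF a b -> add_edge eG u v (f a) (f b)) &
      exists a b, [/\ eF a b, f a = u & f b = v]].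

Definition degree (V : finType) (e : rel V) (v : V) := #|[set w | e v w]|.

Definition regular (V : finType) (e : rel V) :=
  exists d, forall v, degree e v = d.

Definition num_edges (V : finType) (e : rel V) := #|[set p : V * V | e p.1 p.2]|./2.

Definition edge_transitive (V : finType) (e : rel V) :=
  forall u v u' v', e u v -> e u' v' ->
    exists s : {perm V}, (forall a b, e (s a) (s b) = e a b) /\
      ((s u = u' /\ s v = v') \/ (s u = v' /\ s v = u')).

(* "rsat(n,F) <= m": there is a regular n-vertex F-saturated graph with at most m edges *)
Definition rsat_le (VF : finType) (eF : rel VF) (n m : nat) :=
  exists eG : rel 'I_n, [/\ simple_graph eG, regular eG, F_saturated eF eG &
                            num_edges eG <= m].

(* liminf_{n -> oo} rsat(n,F)/n^2 = 0, the liminf over n for which rsat(n,F) is defined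
   (the sequence is nonnegative, so this says liminf <= 0) *)
Definition liminf_rsat_over_n2_is_0 (VF : finType) (eF : rel VF) :=
  forall eps : rat, (0 < eps)%R -> forall N : nat, exists n : nat, exists m : nat,
    (N <= n)%N /\ rsat_le eF n m /\ (m%:R < eps * (n ^ 2)%N%:R)%R.

(* If [G] is [F]-saturated, adding a non-edge [gh] creates a copy of [F] through [gh],
   and by edge-transitivity the copy can be chosen to send the deleted edge [xy] of [F]
   onto [gh].  Blowing this copy up, and permuting the cliques replacing [x] and [y] so
   that the endpoints of the extra edge of [F'_t] land on the ends of the new edge, gives
   a copy of [F'_t] through any new edge of [G[K_t]].

   For [F = K_s], [G[K_t]] is [F'_t]-free: the vertices of [F'_t] outside the clique of
   [x] form a clique of size [(s-1)t], which in the [K_s]-free graph [G[K_t]] must be the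
   union of [s-1] whole cliques; so [(x,a)] is mapped outside these cliques, and likewise
   for [(y,b)].  Then [(x,a)], [(y,b)] and the cliques of the other [s-2] vertices of
   [K_s] project onto a [K_s] of [G].

   The Kneser graph [KG(sk-1, k)] is regular and [K_s]-saturated, and its degree
   [C(sk-1-k, k)] is at most [(s-1)/(s-1+k)] times its order [C(sk-1, k)], so its
   blow-ups have [o(n^2)] edges as [k] grows. *)

From mathcomp Require Import all_boot all_order all_algebra all_fingroup zify lra.
Set Implicit Arguments. Unset Strict Implicit. Unset Printing Implicit Defensive.
Import Order.TTheory GRing.Theory Num.Theory.

Definition graph_hom (VF VG : finType) (eF : rel VF) (eG : rel VG) (f : VF -> VG) :=
  forall u v, eF u v -> eG (f u) (f v).

Definition copy_through (VF VG : finType) (eF : rel VF) (eG : rel VG) (u v : VG) :=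
  exists f : VF -> VG, [/\ injective f, graph_hom eF (add_edge eG u v) f &
    exists a b, [/\ eF a b, f a = u & f b = v]].

Lemma add_edgeC (V : finType) (e : rel V) u v : add_edge e u v =2 add_edge e v u.
Proof. by move=> p q; rewrite /add_edge -orbA (orbC ((p == u) && _)) orbA. Qed.

Lemma add_edge_new (V : finType) (e : rel V) u v : add_edge e u v u v.
Proof. by rewrite /add_edge !eqxx orbT. Qed.

Lemma add_edge_newC (V : finType) (e : rel V) u v : add_edge e u v v u.
Proof. by rewrite add_edgeC add_edge_new. Qed.

Lemma add_edge_sub (V : finType) (e : rel V) u v p q : e p q -> add_edge e u v p q.
Proof. by rewrite /add_edge => ->. Qed.

Section Saturation.

Variables (VF VG : finType) (eF : rel VF) (eG : rel VG).

Lemma copy_through_of_contains u v : symmetric eF -> ~ contains eF eG ->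
  contains eF (add_edge eG u v) -> copy_through eF eG u v.
Proof.
move=> symF freeG [f [injf homf]]; exists f; split=> //.
have [/existsP[a /existsP[b /and3P[eab /eqP fa /eqP fb]]] | no_uv] :=
  boolP [exists a, exists b, [&& eF a b, f a == u & f b == v]]; first by exists a, b.
case: freeG; exists f; split=> // a b eab.
move: (homf a b eab); rewrite /add_edge -orbA.
case/or3P=> [//| /andP[fa fb] | /andP[fb fa]]; case/existsP: no_uv.
  by exists a; apply/existsP; exists b; rewrite eab fa fb.
by exists b; apply/existsP; exists a; rewrite symF eab fa fb.
Qed.

Lemma saturated_oversaturated : symmetric eF -> F_saturated eF eG ->
  F_oversaturated eF eG.
Proof.
move=> symF [freeG satG] u v neq_uv nuv.
by apply: copy_through_of_contains; last exact: satG.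
Qed.

Lemma edge_transitive_copy_through x y u v : edge_transitive eF -> eF x y ->
  copy_through eF eG u v ->
  exists2 f : VF -> VG, injective f /\ graph_hom eF (add_edge eG u v) f &
    (f x = u /\ f y = v) \/ (f x = v /\ f y = u).
Proof.
move=> trF exy [f [injf homf [a [b [eab fa fb]]]]].
have [sigma [autF sxy]] := trF _ _ _ _ exy eab.
exists (f \o sigma).
  by split=> [p q /injf /perm_inj | p q epq]; last by apply: homf; rewrite autF.
by rewrite /= -fa -fb; case: sxy => -[-> ->]; [left | right].
Qed.

Lemma oversaturated_saturated : ~ contains eF eG -> F_oversaturated eF eG ->
  F_saturated eF eG.
Proof.
move=> freeG overG; split=> // u v neq_uv nuv.
by have [f [injf homf _]] := overG u v neq_uv nuv; exists f.
Qed.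

End Saturation.

Section BlowUp.

Variables (VF VG : finType) (eF : rel VF) (eG : rel VG) (t : nat).

Lemma blowup_lift (x y : VF) (a b i j : 'I_t) (psi : VF -> VG) :
  x != y -> injective psi -> graph_hom eF (add_edge eG (psi x) (psi y)) psi ->
  exists2 f : VF * 'I_t -> VG * 'I_t,
    injective f /\ graph_hom (Fprime_t eF x y a b)
                     (add_edge (blowup_clique eG t) (psi x, i) (psi y, j)) f &
    f (x, a) = (psi x, i) /\ f (y, b) = (psi y, j).
Proof.
move=> neq_xy injpsi hompsi.
pose pi w : {perm 'I_t} :=
  if w == x then tperm a i else if w == y then tperm b j else 1%g.
have [pix piy] : pi x a = i /\ pi y b = j.
  by rewrite /pi eqxx eq_sym (negbTE neq_xy) eqxx !tpermL.
exists (fun p => (psi p.1, pi p.1 p.2)); last by rewrite /= pix piy.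
split=> [[w k] [w' k'] [/injpsi eww] | [w k] [w' k']]; first by subst w' => /perm_inj ->.
rewrite /Fprime_t /add_edge /= => /orP[/orP[|] | ].
- rewrite /blowup_clique /= => /orP[/andP[/eqP eww nkk] | /andP[/hompsi]].
    by subst w'; rewrite eqxx (inj_eq perm_inj) nkk.
  rewrite /add_edge !(inj_eq injpsi) => + nxy; rewrite -orbA (negbTE nxy) orbF => ->.
  by rewrite orbT.
- by case/andP=> /eqP[-> ->] /eqP[-> ->]; rewrite pix piy !eqxx orbT.
- by case/andP=> /eqP[-> ->] /eqP[-> ->]; rewrite pix piy !eqxx !orbT.
Qed.

Lemma blowup_clique_oversaturated (x y : VF) (a b : 'I_t) :
  simple_graph eF -> edge_transitive eF -> eF x y -> F_saturated eF eG ->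
  F_oversaturated (Fprime_t eF x y a b) (blowup_clique eG t).
Proof.
move=> [symF irrF] trF exy satG [g i] [h j] neq nadj.
have neq_xy : x != y by apply: contraTneq exy => ->; rewrite irrF.
move: nadj; rewrite /blowup_clique negb_or negb_and negbK /= => /andP[ngh_ij ngh].
have neq_gh : g != h.
  by apply: contra_neq neq => egh; move: ngh_ij; rewrite egh eqxx => /eqP->.
have := saturated_oversaturated symF satG neq_gh ngh.
case/(edge_transitive_copy_through trF exy) => psi [injpsi hompsi].
case=> [[gx hy] | [hx gy]]; subst g h.
  have [f [injf homf] [fx fy]] := blowup_lift a b i j neq_xy injpsi hompsi.
  by exists f; split=> //; exists (x, a), (y, b); split=> //; exact: add_edge_new.
have {}hompsi : graph_hom eF (add_edge eG (psi x) (psi y)) psi.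
  by move=> p q /hompsi; rewrite add_edgeC.
have [f [injf homf] [fx fy]] := blowup_lift a b j i neq_xy injpsi hompsi.
exists f; split=> //; first by move=> p q /homf; rewrite add_edgeC.
by exists (y, b), (x, a); split=> //; exact: add_edge_newC.
Qed.

End BlowUp.

Section BlowUpDegree.

Variables (V : finType) (e : rel V) (t : nat).

Lemma blowup_clique_simple : simple_graph e -> simple_graph (blowup_clique e t).
Proof.
case=> symG irrG; split=> [p q | p]; last by rewrite /blowup_clique !eqxx irrG.
by rewrite /blowup_clique eq_sym (eq_sym p.2) symG.
Qed.

Lemma degree_blowup_clique g i : irreflexive e ->
  degree (blowup_clique e t) (g, i) = t.-1 + degree e g * t.
Proof.
move=> irrG; rewrite /degree.
have -> : [set q | blowup_clique e t (g, i) q] =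
          setX [set g] [set~ i] :|: setX [set w | e g w] [set: 'I_t].
  by apply/setP => -[h j]; rewrite !inE /blowup_clique /= eq_sym (eq_sym j) andbT.
rewrite cardsU (_ : _ :&: _ = set0) ?cards0 ?subn0; last first.
  by apply/setP => -[h j]; rewrite !inE andbT; case: eqP => //= ->; rewrite irrG andbF.
by rewrite !cardsX cards1 cardsC1 cardsT card_ord mul1n.
Qed.

Lemma blowup_clique_regular d : irreflexive e -> (forall v, degree e v = d) ->
  forall p, degree (blowup_clique e t) p = t.-1 + d * t.
Proof. by move=> irrG regG [g i]; rewrite degree_blowup_clique ?regG. Qed.

End BlowUpDegree.

Definition is_clique (V : finType) (e : rel V) (A : {set V}) :=
  {in A &, forall u v, u != v -> e u v}.

Lemma clique_contains_complete (V : finType) (e : rel V) s (A : {set V}) :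
  s <= #|A| -> is_clique e A -> contains (complete_rel s) e.
Proof.
move=> le_sA cliqueA; exists (fun i => enum_val (widen_ord le_sA i)); split.
  by move=> i j /enum_val_inj /(congr1 val) /= /val_inj.
move=> i j neq_ij; apply: cliqueA; rewrite ?enum_valP // (inj_eq enum_val_inj).
by apply: contra neq_ij => /eqP /(congr1 val) /= /val_inj ->.
Qed.

Lemma clique_hom_imset (VF VG : finType) (eF : rel VF) (eG : rel VG) (f : VF -> VG)
    (A : {set VF}) :
  injective f -> graph_hom eF eG f -> is_clique eF A -> is_clique eG (f @: A).
Proof.
move=> injf homf cliqueA _ _ /imsetP[u uA ->] /imsetP[v vA ->].
by rewrite (inj_eq injf) => neq_uv; apply/homf/cliqueA.
Qed.

Section BlowUpCliques.

Variables (V : finType) (e : rel V) (t : nat).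

Lemma clique_blowup_fst (D : {set V * 'I_t}) :
  is_clique (blowup_clique e t) D -> is_clique e (fst @: D).
Proof.
move=> cliqueD _ _ /imsetP[p pD ->] /imsetP[q qD ->] neq_pq.
have /(cliqueD p q pD qD) : p != q by apply: contraNneq neq_pq => ->.
by rewrite /blowup_clique (negbTE neq_pq).
Qed.

Lemma card_le_fst (D : {set V * 'I_t}) : #|D| <= #|fst @: D| * t.
Proof.
rewrite -[t in _ * t]card_ord -cardsT -cardsX; apply/subset_leq_card/subsetP => -[g i] pD.
by rewrite in_setX inE andbT (imset_f fst pD).
Qed.

(* [fst @: D] is a clique of [G], so it has fewer than [s] vertices, and each fibre has
   at most [t]. *)
Lemma blowup_clique_max_full s (D : {set V * 'I_t}) :
  ~ contains (complete_rel s) e -> is_clique (blowup_clique e t) D ->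
  #|D| = s.-1 * t -> D = setX (fst @: D) [set: 'I_t].
Proof.
move=> freeG cliqueD cardD.
have lt_fst : #|fst @: D| < s.
  rewrite ltnNge; apply/negP => /clique_contains_complete contains_Ks.
  exact/freeG/contains_Ks/clique_blowup_fst.
apply/eqP; rewrite eqEcard cardsX cardsT card_ord cardD leq_mul2r.
rewrite -ltnS (leq_trans lt_fst (leqSpred s)) orbT andbT.
by apply/subsetP => -[g i] pD; rewrite in_setX inE andbT (imset_f fst pD).
Qed.

End BlowUpCliques.

Lemma complete_rel_simple s : simple_graph (complete_rel s).
Proof. by split=> [i j | i]; rewrite /complete_rel ?eqxx // eq_sym. Qed.

Lemma complete_rel_edge_transitive s : edge_transitive (complete_rel s).
Proof.
move=> u v u' v' neq_uv neq_u'v'; pose sigma := (tperm u u' * tperm (tperm u u' v) v')%g.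
exists sigma; split=> [p q | ]; first by rewrite /complete_rel (inj_eq perm_inj).
left; rewrite !permM tpermL; split; last by rewrite tpermL.
rewrite tpermD //; last by rewrite eq_sym.
by rewrite -{2}(tpermL u u') (inj_eq perm_inj) eq_sym.
Qed.

Section CompleteFprime.

Variables (s t : nat) (x y : 'I_s) (a b : 'I_t).
Hypothesis neq_xy : x != y.

Let Fst := Fprime_t (complete_rel s) x y a b.

Lemma Fprime_t_complete_avoid z w k w' k' : (z == x) || (z == y) ->
  w != z -> w' != z -> (w, k) != (w', k') -> Fst (w, k) (w', k').
Proof.
move=> zxy wz w'z neq_wk.
rewrite /Fst /Fprime_t /add_edge /blowup_clique /del_edge /complete_rel /=.
case: (eqVneq w w') => [eww | neq_ww'] /=.
  by subst w'; rewrite -!orbA; apply/orP; left; apply: contraNneq neq_wk => ->.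
by case/orP: zxy => /eqP zE; subst z; rewrite ?(negbTE wz) ?(negbTE w'z) /= ?andbF.
Qed.

Lemma Fprime_t_clique_avoid z : (z == x) || (z == y) ->
  is_clique Fst (setX [set~ z] [set: 'I_t]).
Proof.
move=> zxy [w k] [w' k']; rewrite !in_setX !inE !andbT.
exact: Fprime_t_complete_avoid.
Qed.

Definition Fprime_t_core := (x, a) |: ((y, b) |: setX (~: [set x; y]) [set: 'I_t]).

Lemma Fprime_t_clique_core : is_clique Fst Fprime_t_core.
Proof.
have xx : (x == x) || (x == y) by rewrite eqxx.
have yy : (y == x) || (y == y) by rewrite eqxx orbT.
move=> [w k] [w' k']; rewrite !inE /= !andbT !negb_or.
case/or3P=> [/eqP[-> ->] | /eqP[-> ->] | /andP[wx wy]];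
  case/or3P=> [/eqP[-> ->] | /eqP[-> ->] | /andP[w'x w'y]] neq; rewrite ?eqxx // in neq.
- exact: add_edge_new.
- by apply: (Fprime_t_complete_avoid yy).
- exact: add_edge_newC.
- by apply: (Fprime_t_complete_avoid xx); rewrite // eq_sym.
- by apply: (Fprime_t_complete_avoid yy).
- by apply: (Fprime_t_complete_avoid xx); rewrite // eq_sym.
- by apply: (Fprime_t_complete_avoid xx).
Qed.

End CompleteFprime.

Lemma blowup_clique_Fprime_t_free (V : finType) (e : rel V) s t
    (x y : 'I_s) (a b : 'I_t) :
  x != y -> ~ contains (complete_rel s) e ->
  ~ contains (Fprime_t (complete_rel s) x y a b) (blowup_clique e t).
Proof.
move=> neq_xy freeG [f [injf homf]].
have xx : (x == x) || (x == y) by rewrite eqxx.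
have yy : (y == x) || (y == y) by rewrite eqxx orbT.
pose P z := fst @: (f @: setX [set~ z] [set: 'I_t]).
have fullP z : (z == x) || (z == y) ->
    f @: setX [set~ z] [set: 'I_t] = setX (P z) [set: 'I_t].
  move=> zxy; apply: (blowup_clique_max_full freeG).
    exact/(clique_hom_imset injf homf)/Fprime_t_clique_avoid.
  by rewrite card_imset // cardsX cardsC1 !cardsT !card_ord.
have notP z c : (z == x) || (z == y) -> (f (z, c)).1 \notin P z.
  move=> zxy; apply: contraFN (_ : f (z, c) \in f @: setX [set~ z] [set: 'I_t] = false).
    by rewrite fullP //; case: (f (z, c)) => g i; rewrite in_setX inE andbT.
  by rewrite mem_imset // in_setX !inE eqxx.
set Z := setX (~: [set x; y]) [set: 'I_t].
have PZ z : (z == x) || (z == y) -> fst @: (f @: Z) \subset P z.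
  move=> zxy; apply/imsetS/imsetS/subsetP => -[w k].
  by rewrite !in_setX !inE negb_or !andbT => /andP[]; case/orP: zxy => /eqP->.
have q'Px : (f (y, b)).1 \in P x by rewrite !imset_f // in_setX !inE eq_sym neq_xy.
have card_PZ : (s - 2) * t <= #|fst @: (f @: Z)| * t.
  apply: leq_trans (card_le_fst _); rewrite card_imset // cardsX cardsT card_ord.
  by rewrite cardsCs setCK cards2 neq_xy card_ord.
have t_gt0 : 0 < t by apply: leq_ltn_trans (ltn_ord a).
rewrite leq_pmul2r // in card_PZ.
have qq' : (f (x, a)).1 != (f (y, b)).1 by apply: contraNneq (notP _ a xx) => ->.
have qZ := contraNN (subsetP (PZ _ xx) _) (notP _ a xx).
have q'Z := contraNN (subsetP (PZ _ yy) _) (notP _ b yy).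
have := clique_hom_imset injf homf (Fprime_t_clique_core (a := a) (b := b) neq_xy).
move/clique_blowup_fst/(clique_contains_complete _); apply: contra_not freeG; apply.
rewrite /Fprime_t_core -/Z !imsetU1 !cardsU1 !inE negb_or qq' qZ q'Z /=.
by rewrite addnA -leq_subLR.
Qed.

Lemma blowup_clique_Fprime_t_saturated (V : finType) (e : rel V) s t
    (x y : 'I_s) (a b : 'I_t) :
  x != y -> F_saturated (complete_rel s) e ->
  F_saturated (Fprime_t (complete_rel s) x y a b) (blowup_clique e t).
Proof.
move=> neq_xy satG; apply: oversaturated_saturated.
  by apply: blowup_clique_Fprime_t_free neq_xy _; case: satG.
apply: blowup_clique_oversaturated satG => //.
  exact: complete_rel_simple.
exact: complete_rel_edge_transitive.
Qed.

Definition kneser_vertex (m k : nat) : finType := {A : {set 'I_m} | #|A| == k}.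

Definition kneser (m k : nat) : rel (kneser_vertex m k) :=
  fun A B => [disjoint val A & val B].
Arguments kneser : clear implicits.

Section Kneser.

Variables m k : nat.

Lemma card_kneser_vertex (A : kneser_vertex m k) : #|val A| = k.
Proof. exact: eqP (valP A). Qed.

Lemma kneser_simple : 0 < k -> simple_graph (kneser m k).
Proof.
move=> k_gt0; split=> [A B | A]; first by rewrite /kneser disjoint_sym.
by rewrite /kneser -setI_eq0 setIid -cards_eq0 card_kneser_vertex; case: k k_gt0.
Qed.

Lemma card_kneser : #|kneser_vertex m k| = 'C(m, k).
Proof.
by rewrite card_sig -[m in RHS]card_ord -card_draws; apply: eq_card => A; rewrite !inE.
Qed.

Lemma degree_kneser (A : kneser_vertex m k) : degree (kneser m k) A = 'C(m - k, k).
Proof.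
rewrite /degree -(card_imset _ val_inj).
have -> : m - k = #|~: val A| by rewrite cardsCs setCK card_ord card_kneser_vertex.
rewrite -cards_draws; apply: eq_card => X.
rewrite !inE -disjoints_subset disjoint_sym; apply/imsetP/andP => [[B] | [dAX cX]].
  by rewrite inE /kneser => dAB ->; rewrite card_kneser_vertex.
by exists (exist _ X cX); rewrite ?inE.
Qed.

Lemma kneser_complete_free s : m < s * k -> ~ contains (complete_rel s) (kneser m k).
Proof.
move=> lt_m_sk [f [injf homf]].
pose g (p : 'I_s * 'I_k) : 'I_m :=
  enum_val (cast_ord (esym (card_kneser_vertex (f p.1))) p.2).
suff /leq_card : injective g by rewrite card_prod !card_ord leqNgt lt_m_sk.
move=> [i l] [i' l']; rewrite /g /=; case: (eqVneq i i') => [<- | neq_ii' eq_g].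
  by move/enum_val_inj/cast_ord_inj->.
have := enum_valP (cast_ord (esym (card_kneser_vertex (f i))) l).
by rewrite eq_g (disjointFl (homf _ _ neq_ii')) // enum_valP.
Qed.

Lemma kneser_disjoint_family j (C : {set 'I_m}) : 0 < k -> j * k <= #|C| ->
  exists S : {set kneser_vertex m k},
    [/\ j <= #|S|, is_clique (kneser m k) S & forall D, D \in S -> val D \subset C].
Proof.
move=> k_gt0 le_jk_C.
have le_C : #|{: 'I_j * 'I_k}| <= #|C| by rewrite card_prod !card_ord.
pose g p : 'I_m := enum_val (widen_ord le_C (enum_rank p)).
have injg : injective g.
  by move=> p q /enum_val_inj /(congr1 val) /= /val_inj /enum_rank_inj.
have card_block i : #|[set g (i, l) | l : 'I_k]| == k.
  by rewrite card_imset ?card_ord // => l l' /injg [].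
pose block i : kneser_vertex m k := exist _ [set g (i, l) | l : 'I_k] (card_block i).
have block_disj i i' : i != i' -> kneser m k (block i) (block i').
  move=> neq_ii'; rewrite /kneser /= -setI_eq0; apply/eqP/setP => u; rewrite !inE.
  apply/andP => -[/imsetP[l _ ->] /imsetP[l' _ /injg [eii' _]]].
  by rewrite eii' eqxx in neq_ii'.
exists [set block i | i : 'I_j]; split.
- rewrite card_imset ?card_ord // => i i' /(congr1 val) /= eq_blocks.
  apply/eqP/negPn/negP => /block_disj; rewrite /kneser /= eq_blocks -setI_eq0 setIid.
  move=> /eqP/setP/(_ (g (i', Ordinal k_gt0))).
  by rewrite inE (imset_f (fun l => g (i', l))).
- move=> _ _ /imsetP[i _ ->] /imsetP[i' _ ->] neq.
  by apply: block_disj; apply: contraNneq neq => ->.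
- by move=> _ /imsetP[i _ ->]; apply/subsetP => _ /imsetP[l _ ->]; apply: enum_valP.
Qed.

End Kneser.

Lemma kneser_complete_saturated s k : 2 <= s -> 0 < k ->
  F_saturated (complete_rel s) (kneser (s * k).-1 k).
Proof.
move=> s_ge2 k_gt0; split.
  by apply: kneser_complete_free; rewrite prednK // muln_gt0 k_gt0 andbT; case: s s_ge2.
move=> A B neq_AB nAB.
have [symK irrK] := kneser_simple (s * k).-1 k_gt0.
set C := ~: (val A :|: val B).
have card_C : (s - 2) * k <= #|C|.
  have : 0 < #|val A :&: val B| by rewrite card_gt0 setI_eq0.
  have := cardsU (val A) (val B); have := cardsCs (val A :|: val B).
  by rewrite card_ord !card_kneser_vertex -/C; nia.
have [S [card_S cliqueS subC]] := kneser_disjoint_family k_gt0 card_C.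
have disjS (D E : kneser_vertex (s * k).-1 k) :
    E \in S -> val D \subset val A :|: val B -> kneser _ _ D E.
  move=> ES sub_D; rewrite /kneser disjoint_sym disjoints_subset.
  by apply: subset_trans (subC E ES) _; rewrite setCS.
have AS E : E \in S -> kneser _ _ A E by move/disjS; apply; apply: subsetUl.
have BS E : E \in S -> kneser _ _ B E by move/disjS; apply; apply: subsetUr.
apply: (clique_contains_complete (A := A |: (B |: S))).
  rewrite !cardsU1 !inE negb_or neq_AB.
  rewrite (contraNN (AS A) (negbT (irrK A))) (contraNN (BS B) (negbT (irrK B))) /=.
  by rewrite addnA -leq_subLR.
move=> u v; rewrite !inE => /or3P[/eqP-> | /eqP-> | uS] /or3P[/eqP-> | /eqP-> | vS] neq_uv;
  rewrite ?eqxx // in neq_uv.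
- exact: add_edge_new.
- by rewrite add_edge_sub ?AS.
- exact: add_edge_newC.
- by rewrite add_edge_sub ?BS.
- by rewrite add_edge_sub // symK AS.
- by rewrite add_edge_sub // symK BS.
- by rewrite add_edge_sub ?cliqueS.
Qed.

Lemma bin_pred_le s M k : 0 < M -> M <= s * k ->
  s * 'C(M.-1, k) <= (s - 1) * 'C(M, k).
Proof.
move=> M_gt0 le_M_sk; rewrite -(leq_pmul2l M_gt0) mulnCA mul_bin_down !mulnA.
by rewrite [M * _]mulnC leq_mul2r; apply/orP; right; nia.
Qed.

(* Each step costs a factor [(s-1)/s]; Bernoulli bounds [((s-1)/s)^j] by [(s-1)/(s-1+j)]. *)
Lemma bin_sub_le s M k j : 0 < s -> M <= s * k -> j <= M ->
  'C(M - j, k) * (s - 1 + j) <= (s - 1) * 'C(M, k).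
Proof.
move=> s_gt0 le_M_sk; elim: j => [_ | j IHj lt_j_M]; first by rewrite subn0 addn0 mulnC.
have step : s * 'C(M - j.+1, k) <= (s - 1) * 'C(M - j, k).
  by rewrite subnS; apply: bin_pred_le; lia.
have IH := IHj (ltnW lt_j_M).
rewrite -(leq_pmul2l s_gt0); nia.
Qed.

Lemma card_arcs (V : finType) (e : rel V) :
  #|[set p : V * V | e p.1 p.2]| = \sum_(v : V) degree e v.
Proof.
transitivity (\sum_(v : V) \sum_(w : V) (e v w : nat)).
  rewrite pair_bigA -sum1_card big_mkcond /=.
  by apply: eq_bigr => -[v w] _; rewrite inE; case: (e v w).
apply: eq_bigr => v _; rewrite /degree -sum1_card [RHS]big_mkcond /=.
by apply: eq_bigr => w _; rewrite inE; case: (e v w).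
Qed.

Lemma num_edges_regular (V : finType) (e : rel V) d : (forall v, degree e v = d) ->
  num_edges e = (#|V| * d)./2.
Proof.
move=> reg_e; rewrite /num_edges card_arcs.
by rewrite (eq_bigr _ (fun v _ => reg_e v)) sum_nat_const.
Qed.

Section Relabel.

Variables (W : finType) (H : rel W).

Definition relabel : rel 'I_#|W| := fun i j => H (enum_val i) (enum_val j).

Lemma relabel_simple : simple_graph H -> simple_graph relabel.
Proof. by case=> symH irrH; split=> [i j | i]; [exact: symH | exact: irrH]. Qed.

Lemma degree_relabel i : degree relabel i = degree H (enum_val i).
Proof.
rewrite /degree -(card_imset _ enum_val_inj); apply: eq_card => w.
rewrite inE; apply/imsetP/idP => [[j] | Hw]; first by rewrite inE => ? ->.
by exists (enum_rank w); rewrite ?inE /relabel enum_rankK.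
Qed.

Lemma relabel_saturated (VF : finType) (eF : rel VF) :
  F_saturated eF H -> F_saturated eF relabel.
Proof.
case=> freeH satH; split=> [[f [injf homf]] | i j neq_ij nij].
  by apply: freeH; exists (enum_val \o f); split=> [u v /enum_val_inj /injf | u v /homf].
have neq_ij' : enum_val i != enum_val j by rewrite (inj_eq enum_val_inj).
have [f [injf homf]] := satH _ _ neq_ij' nij.
exists (enum_rank \o f); split=> [u v /enum_rank_inj /injf // | u v /homf].
by rewrite /add_edge /relabel /= !enum_rankK -!(inj_eq enum_val_inj) !enum_rankK.
Qed.

End Relabel.

Lemma rsat_le_regular (VF W : finType) (eF : rel VF) (H : rel W) d :
  simple_graph H -> (forall w, degree H w = d) -> F_saturated eF H ->
  rsat_le eF #|W| (#|W| * d)./2.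
Proof.
move=> simH regH satH; exists (relabel H); split.
- exact: relabel_simple.
- by exists d => i; rewrite degree_relabel.
- exact: relabel_saturated.
- by rewrite (@num_edges_regular _ _ d) ?card_ord // => i; rewrite degree_relabel.
Qed.

Lemma liminf_rsat_zero_nat (VF : finType) (eF : rel VF) :
  (forall K N, exists n m, [/\ N <= n, rsat_le eF n m & m * K < n ^ 2]) ->
  liminf_rsat_over_n2_is_0 eF.
Proof.
move=> sparse eps eps_gt0 N; pose K := Num.bound eps^-1.
have [n [m [le_Nn rsat_nm lt_mK]]] := sparse K N.
exists n, m; split=> //; split=> //.
have eps_K : (eps^-1 < K%:R)%R by apply/archi_boundP/ltW; rewrite invr_gt0.
have K_gt0 : (0 < K%:R :> rat)%R by apply: le_lt_trans eps_K; rewrite invr_ge0 ltW.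
have {}eps_K : (1 < eps * K%:R)%R by rewrite -ltr_pdivrMl // mulr1.
have {}lt_mK : (m%:R * K%:R < (n ^ 2)%:R :> rat)%R by rewrite -natrM ltr_nat.
have n2_ge0 : (0 <= (n ^ 2)%:R :> rat)%R by rewrite ler0n.
nra.
Qed.

Lemma kneser_degree_small s k L : 3 <= s -> 2 * L * s < k ->
  ('C((s * k).-1 - k, k)).+1 * L < 'C((s * k).-1, k).
Proof.
move=> s_ge3 lt_k; set d := 'C(_ - k, k); set NN := 'C(_, k).
have ratio : d * (s - 1 + k) <= (s - 1) * NN by apply: bin_sub_le; nia.
have d_gt0 : 0 < d by rewrite bin_gt0; nia.
nia.
Qed.

Lemma liminf_rsat_Fprime_t_complete s t (x y : 'I_s) (a b : 'I_t) :
  3 <= s -> x != y -> liminf_rsat_over_n2_is_0 (Fprime_t (complete_rel s) x y a b).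
Proof.
move=> s_ge3 neq_xy; apply: liminf_rsat_zero_nat => K N.
pose k := (2 * (K + N) * s).+1; pose m := (s * k).-1.
have k_gt0 : 0 < k by [].
have sparse : ('C(m - k, k)).+1 * (K + N) < 'C(m, k).
  exact: kneser_degree_small s_ge3 (ltnSn _).
have t_gt0 : 0 < t by apply: leq_ltn_trans (ltn_ord a).
have [simK irrK] := kneser_simple m k_gt0.
have := rsat_le_regular (blowup_clique_simple t (conj simK irrK))
  (blowup_clique_regular (t := t) irrK (@degree_kneser m k))
  (blowup_clique_Fprime_t_saturated a b neq_xy
     (kneser_complete_saturated (ltnW s_ge3) k_gt0)).
rewrite card_prod card_kneser card_ord => rsat.
set n := 'C(m, k) * t; set D := t.-1 + 'C(m - k, k) * t.
exists n, (n * D)./2; split=> //; first nia.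
have lt_DK : D * K < n by nia.
rewrite -divn2; apply: leq_ltn_trans (_ : _ <= n * D * K) _.
  by rewrite leq_mul2r leq_div orbT.
by rewrite -mulnA expnS expn1 ltn_pmul2l // muln_gt0 t_gt0 andbT; nia.
Qed.

Theorem theorem3p1 :
  (* general edge-transitive F *)
  (forall (VF : finType) (eF : rel VF), simple_graph eF -> edge_transitive eF ->
   forall x y : VF, eF x y ->
   forall (VG : finType) (eG : rel VG), simple_graph eG -> regular eG ->
     F_saturated eF eG ->
   forall (t : nat), (2 <= t)%N -> forall a b : 'I_t,
     regular (blowup_clique eG t) /\
     F_oversaturated (Fprime_t eF x y a b) (blowup_clique eG t))
  /\
  (* F = K_s, s >= 3 *)
  (forall (s : nat), (3 <= s)%N -> forall x y : 'I_s, x != y ->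
   forall (VG : finType) (eG : rel VG), simple_graph eG -> regular eG ->
     F_saturated (complete_rel s) eG ->
   forall (t : nat), (2 <= t)%N -> forall a b : 'I_t,
     F_saturated (Fprime_t (complete_rel s) x y a b) (blowup_clique eG t))
  /\
  (forall (s t : nat), (3 <= s)%N -> (2 <= t)%N -> forall x y : 'I_s, x != y ->
   forall a b : 'I_t,
     liminf_rsat_over_n2_is_0 (Fprime_t (complete_rel s) x y a b)).
Proof.
split; [| split].
- move=> VF eF simF trF x y exy VG eG [_ irrG] [d regG] satG t _ a b; split.
    by exists (t.-1 + d * t); apply: blowup_clique_regular.
  exact: blowup_clique_oversaturated.
- move=> s _ x y neq_xy VG eG _ _ satG t _ a b.
  exact: blowup_clique_Fprime_t_saturated.
- move=> s t s_ge3 _ x y neq_xy a b.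
  exact: liminf_rsat_Fprime_t_complete.
Qed.
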